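(* Let $k\ge2$ be an integer. For every online 1-bounded space $k$-cardinality constrained algorithm $ALG$ and every integer $m\ge3$, there exists an item sequence $I$ such that $OPT_k(I)=m$ and: (A) if $k=2$, $ALG(I)\ge2\cdot OPT_k(I)-2$; (B) if $k\ge3$, $ALG(I)\ge\left(3-\frac2k\right)\cdot OPT_k(I)-5+\frac5k$.
   Context: The $k$-cardinality constrained bin packing problem: an item sequence $I=(a_1,\dots,a_n)\in(0,1]^n$ must be packed into bins of capacity $1$ with at most $k$ items per bin; $OPT_k(I)$ is the minimum number of non-empty bins, $ALG(I)$ the number used by $ALG$. A $k$-cardinality constrained algorithm always outputs packings with at most $k$ items per bin. An online algorithm processes the items in the given order, irrevocably packing each item into a bin before seeing any later item. A bin is open if it contains an item and may still receive items; closed bins never receive further items. A 1-bounded space algorithm keeps at most one open bin at any time, so each item goes either into the most recently opened bin or into a new bin. *)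

From HB Require Import structures.
From mathcomp Require Import all_boot all_order all_algebra.
From mathcomp Require Import reals.
Set Implicit Arguments. Unset Strict Implicit. Unset Printing Implicit Defensive.
Import Order.TTheory GRing.Theory Num.Theory.
Local Open Scope ring_scope.

Section BinPacking.
Variable R : realType.

Definition valid_items (I : seq R) : Prop := forall x, x \in I -> 0 < x <= 1.

Definition valid_bin (k : nat) (b : seq R) : bool :=
  (size b <= k)%N && (\sum_(x <- b) x <= 1).

(* A deterministic online 1-bounded space algorithm: given the items seen so
   far (in order) and the new item, it decides whether to open a new bin
   (true; this closes the current open bin) or to put the item into the
   current open bin (false).  When no bin is open yet (first item) a new bin
   is opened regardless. *)
Definition online_alg := seq R -> R -> bool.

(* Bins produced, most recent (the open bin) first. *)
Fixpoint pack_aux (alg : online_alg) (past : seq R) (bins : seq (seq R))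
    (I : seq R) : seq (seq R) :=
  match I with
  | [::] => bins
  | a :: I' =>
      let bins' :=
        if alg past a then [:: a] :: bins
        else match bins with
             | [::] => [:: [:: a]]
             | b :: bs => rcons b a :: bs
             end in
      pack_aux alg (rcons past a) bins' I'
  end.

Definition pack (alg : online_alg) (I : seq R) := pack_aux alg [::] [::] I.

Definition ALG (alg : online_alg) (I : seq R) : nat := size (pack alg I).

Definition k_card_alg (k : nat) (alg : online_alg) : Prop :=
  forall I, valid_items I -> all (valid_bin k) (pack alg I).

(* An offline packing of I: item i goes to bin f i (n items never need more
   than n bin labels). *)
Definition feasible_packing (k : nat) (I : seq R)
    (f : 'I_(size I) -> 'I_(size I)) : Prop :=
  forall b : 'I_(size I),
    (#|[set i | f i == b]| <= k)%N /\
    \sum_(i < size I | f i == b) I`_i <= 1.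

Arguments feasible_packing : clear implicits.

Definition nbins (I : seq R) (f : 'I_(size I) -> 'I_(size I)) : nat :=
  #|f @: [set: 'I_(size I)]|.

Arguments nbins : clear implicits.

Definition OPT_eq (k : nat) (I : seq R) (m : nat) : Prop :=
  (exists f, feasible_packing k I f /\ nbins I f = m) /\
  (forall f, feasible_packing k I f -> (m <= nbins I f)%N).

End BinPacking.

(* The adversary presents a chain of 2N = 2(m-1) items, alternately large and
   medium, in which any two consecutive items overflow a bin, followed by
   (k-2)(N-1) tiny items.  A 1-bounded space algorithm packs contiguous
   segments of the input, so each of the first 2N-1 chain items is alone in its
   bin and the remaining (k-2)(N-1)+1 items need a further bin per k of them.
   Offline, large item j shares a bin with medium item j+1 and k-2 tiny items,
   and the first medium item gets a bin of its own: N+1 bins, which is optimal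
   since the N large items and the first medium item pairwise overflow. *)

From HB Require Import structures.
From mathcomp Require Import all_boot all_order all_algebra.
From mathcomp Require Import reals.
From mathcomp Require Import zify ring lra.
Set Implicit Arguments. Unset Strict Implicit. Unset Printing Implicit Defensive.
Import Order.TTheory GRing.Theory Num.Theory.
Local Open Scope ring_scope.

Section Packings.
Variables (R : realType) (k : nat).
Implicit Types (I s : seq R) (bins : seq (seq R)) (alg : online_alg R).

Lemma feasible_packing_pair I (f : 'I_(size I) -> 'I_(size I)) p q :
  valid_items I -> feasible_packing k f -> p != q -> f p = f q ->
  I`_p + I`_q <= 1.
Proof.
move=> vI /(_ (f p))[_ cap_fp] pq fpq.
have I_ge0 (i : 'I_(size I)) : 0 <= I`_i.
  by have /andP[/ltW] := vI _ (mem_nth 0 (ltn_ord i)).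
apply: le_trans cap_fp.
rewrite (bigD1 p) //= (bigD1 q) /=; last by rewrite fpq eqxx eq_sym.
by rewrite addrA lerDl sumr_ge0.
Qed.

Lemma nbins_ge_conflicts I (f : 'I_(size I) -> 'I_(size I)) t
    (h : 'I_t -> 'I_(size I)) :
  valid_items I -> feasible_packing k f -> injective h ->
  (forall a b, a != b -> 1 < I`_(h a) + I`_(h b)) -> (t <= nbins f)%N.
Proof.
move=> vI fI h_inj conflict.
have fh_inj : injective (f \o h).
  move=> a b /= fab; apply/eqP; apply/negP => /negP ab.
  have hab : h a != h b by rewrite (inj_eq h_inj).
  by have := feasible_packing_pair vI fI hab fab; rewrite leNgt conflict.
rewrite /nbins -[t]card_ord -cardsT -(card_imset _ fh_inj).
by apply/subset_leq_card/subsetP => _ /imsetP[a _ ->]; apply: imset_f.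
Qed.

Lemma nbins_le_bound I (f : 'I_(size I) -> 'I_(size I)) t :
  (forall i, f i < t)%N -> (nbins f <= t)%N.
Proof.
move=> f_lt; rewrite /nbins cardE -(size_map val) -[t](size_iota 0).
apply: uniq_leq_size; first by rewrite (map_inj_uniq val_inj) enum_uniq.
by move=> _ /mapP[_ /[!mem_enum] /imsetP[i _ ->] ->]; rewrite mem_iota f_lt.
Qed.

Lemma pack_aux_flatten alg I past bins :
  flatten (rev (pack_aux alg past bins I)) = flatten (rev bins) ++ I.
Proof.
elim: I past bins => [|a I IH] past bins /=; first by rewrite cats0.
rewrite IH; case: (alg past a); first by rewrite rev_cons flatten_rcons -catA.
case: bins => [|b bins] //=.
by rewrite !rev_cons !flatten_rcons -!catA cat_rcons.
Qed.

Lemma pack_flatten alg I : flatten (rev (pack alg I)) = I.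
Proof. exact: pack_aux_flatten. Qed.

Lemma valid_bin_pair a b s :
  valid_bin k [:: a, b & s] -> {in s, forall x, 0 <= x} -> a + b <= 1.
Proof.
move=> /andP[_]; rewrite !big_cons addrA => sum_le1 s_ge0.
apply: le_trans sum_le1; rewrite lerDl big_seq sumr_ge0 //.
Qed.

Lemma size_flatten_valid_bins bins :
  all (valid_bin k) bins -> (size (flatten bins) <= k * size bins)%N.
Proof.
elim: bins => [|b bins IH] //= /andP[/andP[b_le _] /IH].
by rewrite size_cat mulnS; apply: leq_add.
Qed.

(* Consecutive items of a chain never share a bin, so as long as bins are
   contiguous segments, every bin meeting the chain is a singleton. *)
Lemma chain_bins_lower_bound bins xs ys :
  all (valid_bin k) bins -> flatten bins = xs ++ ys ->
  {in xs ++ ys, forall x, 0 <= x} ->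
  (forall i, (i < size xs)%N -> 1 < (xs ++ ys)`_i + (xs ++ ys)`_i.+1) ->
  (k * size xs + size ys <= k * size bins)%N.
Proof.
elim: bins xs => [|b bins IH] xs.
  move=> _ /= /esym/(congr1 size)/eqP; rewrite size_cat addn_eq0.
  by case/andP=> /eqP-> /eqP-> *; rewrite addn0.
move=> /andP[b_ok bins_ok]; case: xs => [|x xs] flat_eq xs_ge0 chain.
  move: flat_eq => /= <-; rewrite muln0 add0n size_cat mulnS; apply: leq_add.
    by case/andP: b_ok.
  exact: size_flatten_valid_bins bins_ok.
case: b b_ok flat_eq => [|y [|z s]] + flat_eq.
- move=> _; have := IH (x :: xs) bins_ok flat_eq xs_ge0 chain.
  by move/leq_trans; apply; rewrite leq_mul2l leqnSn orbT.
- case: flat_eq => -> flat_eq _.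
  have xs_ge0' : {in xs ++ ys, forall x, 0 <= x}.
    by move=> a a_in; apply: xs_ge0; rewrite inE a_in orbT.
  have := IH xs bins_ok flat_eq xs_ge0' (fun i => chain i.+1).
  by rewrite /= !mulnS -addnA leq_add2l.
- case: flat_eq => -> flat_eq b_ok.
  have s_ge0 : {in s, forall x, 0 <= x}.
    by move=> a a_in; apply: xs_ge0; rewrite /= -flat_eq !inE mem_cat a_in !orbT.
  have := chain 0%N isT; rewrite /= -flat_eq /=.
  by rewrite ltNge (valid_bin_pair b_ok s_ge0).
Qed.

Lemma ALG_chain_lower_bound alg I p :
  k_card_alg k alg -> valid_items I -> (p <= size I)%N ->
  (forall i, (i < p)%N -> 1 < I`_i + I`_i.+1) ->
  (k * p + (size I - p) <= k * ALG alg I)%N.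
Proof.
move=> alg_ok vI p_le chain.
have := @chain_bins_lower_bound (rev (pack alg I)) (take p I) (drop p I).
rewrite all_rev size_rev cat_take_drop pack_flatten (size_takel p_le) size_drop.
apply=> //; first exact: alg_ok.
by move=> x /vI /andP[/ltW].
Qed.

End Packings.

Section Instance.
Local Open Scope nat_scope.
Variables (k N : nat).
Hypotheses (k_ge2 : 2 <= k) (N_gt0 : 0 < N).

Definition scale := 4 * N.+1 * k.
Definition big_weight j := scale - 2 * (N - j) * k.
Definition medium_weight j := (2 * (N - j) + 1) * k.

(* In units of 1/scale, chain item 2j is large and 2j+1 medium; consecutive
   chain items overflow a bin by k or 3k, while large item j and medium item
   j+1 leave room k for k-2 tiny items of weight 1. *)
Definition weight p :=
  if p < 2 * N then
    if odd p then medium_weight p./2 else big_weight p./2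
  else 1.

Definition num_items := 2 * N + (k - 2) * (N - 1).

(* Bin c < N holds large item c, medium item c+1 and the tiny items of block
   c; the first medium item gets bin N alone.  Slots 0 and 1 are reserved for
   the large and the medium item. *)
Definition opt_bin p :=
  if p < 2 * N then
    if odd p then (if p == 1 then N else p./2 - 1) else p./2
  else (p - 2 * N) %/ (k - 2).

Definition opt_slot p :=
  if p < 2 * N then nat_of_bool (odd p) else ((p - 2 * N) %% (k - 2)).+2.

Definition slot_weight c s :=
  if s == 0 then weight (2 * c)
  else if s == 1 then (if c == N then weight 1 else weight (2 * c + 3))
  else 1.

Definition conflict_item j := if j < N then 2 * j else 1.

Lemma weight_even j : j < N -> weight (2 * j) = big_weight j.
Proof. by move=> j_lt; rewrite /weight ifT ?mul2n ?odd_double ?doubleK //; lia. Qed.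

Lemma weight_odd j : j < N -> weight (2 * j + 1) = medium_weight j.
Proof.
by move=> j_lt; rewrite /weight ifT ?mul2n ?addn1 /= ?odd_double ?uphalf_double //; lia.
Qed.

Lemma scale_gt0 : 0 < scale.
Proof. rewrite /scale; lia. Qed.

Lemma weight_tiny p : 2 * N <= p -> weight p = 1.
Proof. by rewrite /weight leqNgt => /negbTE->. Qed.

Lemma weight_one : weight 1 = medium_weight 0.
Proof. exact: (weight_odd N_gt0). Qed.

Lemma weight_gt0 p : 0 < weight p.
Proof.
by rewrite /weight /big_weight /medium_weight /scale; case: ifP => //; case: ifP; nia.
Qed.

Lemma weight_le_scale p : weight p <= scale.
Proof.
by rewrite /weight /big_weight /medium_weight /scale; case: ifP; [case: ifP|]; nia.
Qed.

Lemma weight_chain p : p.+1 < 2 * N -> scale < weight p + weight p.+1.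
Proof.
move=> p_lt; have := odd_double_half p; rewrite -mul2n.
move: (p./2) => j; case: (odd p) => /= p_eq; rewrite -{}p_eq in p_lt *.
  have -> : (1 + 2 * j).+1 = 2 * j.+1 by lia.
  rewrite [1 + _]addnC weight_odd ?weight_even; try lia.
  rewrite /big_weight /medium_weight /scale; nia.
rewrite add0n -[(2 * j).+1]addn1 weight_even ?weight_odd; try lia.
rewrite /big_weight /medium_weight /scale; nia.
Qed.

Lemma conflict_item_lt j : j <= N -> conflict_item j < num_items.
Proof. rewrite /conflict_item /num_items; case: ifP; nia. Qed.

Lemma conflict_item_inj j j' :
  j <= N -> j' <= N -> conflict_item j = conflict_item j' -> j = j'.
Proof. rewrite /conflict_item; case: ifP; case: ifP; lia. Qed.

Lemma weight_conflict j j' : j <= N -> j' <= N -> j != j' ->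
  scale < weight (conflict_item j) + weight (conflict_item j').
Proof.
rewrite /conflict_item => j_le j'_le /eqP jj'.
case: ifP => j_lt; case: ifP => j'_lt;
  rewrite ?weight_even ?weight_one // /big_weight /medium_weight /scale; nia.
Qed.

Lemma tiny_item_subn2_gt0 p : p < num_items -> 2 * N <= p -> 0 < k - 2.
Proof.
rewrite /num_items => p_lt p_ge; have : 0 < (k - 2) * (N - 1) by nia.
by rewrite muln_gt0 => /andP[].
Qed.

Lemma opt_bin_le p : p < num_items -> opt_bin p <= N.
Proof.
move=> p_lt; rewrite /opt_bin.
case: (ltnP p (2 * N)) => p_2N; first by do 2?case: ifP; lia.
have k2_gt0 := tiny_item_subn2_gt0 p_lt p_2N.
by apply: ltnW; rewrite ltn_divLR //; move: p_lt; rewrite /num_items; nia.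
Qed.

Lemma opt_slot_lt p : p < num_items -> opt_slot p < k.
Proof.
move=> p_lt; rewrite /opt_slot.
case: (ltnP p (2 * N)) => p_2N; first by case: odd; lia.
have k2_gt0 := tiny_item_subn2_gt0 p_lt p_2N.
by move: (_ %% _) (ltn_pmod (p - 2 * N) k2_gt0) => r; lia.
Qed.

Lemma opt_bin_slot_inj p q : p < num_items -> q < num_items ->
  opt_bin p = opt_bin q -> opt_slot p = opt_slot q -> p = q.
Proof.
move=> p_lt q_lt; rewrite /opt_bin /opt_slot.
case: (ltnP p (2 * N)) => p_2N; case: (ltnP q (2 * N)) => q_2N.
- by case: (boolP (odd p)); case: (boolP (odd q)); do 2?case: eqP; lia.
- by have := ltn_pmod (q - 2 * N) (tiny_item_subn2_gt0 q_lt q_2N); case: odd; lia.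
- by have := ltn_pmod (p - 2 * N) (tiny_item_subn2_gt0 p_lt p_2N); case: odd; lia.
move=> div_eq [mod_eq].
suff : p - 2 * N = q - 2 * N by lia.
by rewrite (divn_eq (p - 2 * N) (k - 2)) div_eq mod_eq -divn_eq.
Qed.

Lemma weight_slot p :
  p < num_items -> weight p = slot_weight (opt_bin p) (opt_slot p).
Proof.
move=> p_lt; rewrite /opt_bin /opt_slot /slot_weight.
case: (ltnP p (2 * N)) => p_2N; last by rewrite weight_tiny.
case: (boolP (odd p)) => /= p_odd; last by congr weight; lia.
case: (eqVneq p 1) => [->|p_ne1]; first by rewrite eqxx.
have -> : (p./2 - 1 == N) = false by lia.
by congr weight; lia.
Qed.

Lemma slot_weight_sum c : \sum_(s < k) slot_weight c s <= scale.
Proof.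
rewrite -(big_mkord xpredT) (big_ltn (ltnW k_ge2)) (big_ltn k_ge2).
rewrite (eq_big_nat _ _ (F2 := fun=> 1)) ?sum_nat_const_nat ?muln1; last first.
  by case=> [|[|s]].
rewrite /slot_weight /=.
case: (ltngtP c N) => [c_lt|c_gt|->]; rewrite ?eqxx.
- rewrite weight_even // (_ : 2 * c + 3 = 2 * c.+1 + 1); last lia.
  case: (ltnP c.+1 N) => c1_N; first rewrite weight_odd //.
    by rewrite /big_weight /medium_weight /scale; nia.
  by rewrite weight_tiny ?/big_weight ?/scale; nia.
- by rewrite !weight_tiny ?/scale; nia.
- by rewrite weight_tiny // weight_one /medium_weight /scale; nia.
Qed.

Section Items.
Variable R : realType.
Local Open Scope ring_scope.

Definition item p : R := (weight p)%:R / scale%:R.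

Definition instance : seq R := mkseq item num_items.

Lemma size_instance : size instance = num_items.
Proof. exact: size_mkseq. Qed.

Lemma ltn_num_items (i : 'I_(size instance)) : (i < num_items)%N.
Proof. by rewrite -size_instance. Qed.

Lemma nth_instance (i : 'I_(size instance)) : instance`_i = item i.
Proof. exact/nth_mkseq/ltn_num_items. Qed.

Let scaleR_gt0 : 0 < scale%:R :> R.
Proof. by rewrite ltr0n scale_gt0. Qed.

Lemma valid_instance : valid_items instance.
Proof.
move=> _ /mapP[p _ ->].
rewrite /item divr_gt0 ?ltr0n ?weight_gt0 ?scale_gt0 //=.
by rewrite ler_pdivrMr // mul1r ler_nat weight_le_scale.
Qed.

Lemma item_pair_gt1 p q : (scale < weight p + weight q)%N -> 1 < item p + item q.
Proof.
by move=> overflow; rewrite -mulrDl ltr_pdivlMr // mul1r -natrD ltr_nat.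
Qed.

Lemma sum_items_le1 (P : pred 'I_(size instance)) :
  (\sum_(i | P i) weight i <= scale)%N -> \sum_(i | P i) instance`_i <= 1.
Proof.
move=> fits; under eq_bigr do rewrite nth_instance.
by rewrite -mulr_suml -natr_sum ler_pdivrMr // mul1r ler_nat.
Qed.

Lemma nbins_instance_ge (f : 'I_(size instance) -> 'I_(size instance)) :
  feasible_packing k f -> (N.+1 <= nbins f)%N.
Proof.
move=> f_ok.
have conflict_lt (j : 'I_N.+1) : (conflict_item j < size instance)%N.
  by rewrite size_instance; apply: conflict_item_lt (ltn_ord j).
pose h j := Ordinal (conflict_lt j).
apply: (nbins_ge_conflicts (h := h) valid_instance f_ok).
  by move=> a b [] /(conflict_item_inj (ltn_ord a) (ltn_ord b)) /val_inj.
by move=> a b ab; rewrite !nth_instance item_pair_gt1 // weight_conflict // -ltnS.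
Qed.

Definition opt_packing (i : 'I_(size instance)) : 'I_(size instance) :=
  insubd i (opt_bin i).

Lemma opt_packing_val i : val (opt_packing i) = opt_bin i.
Proof.
rewrite val_insubd ifT //; apply: leq_ltn_trans (opt_bin_le (ltn_num_items i)) _.
by rewrite size_instance /num_items; nia.
Qed.

Definition opt_slot_ord (i : 'I_(size instance)) : 'I_k :=
  Ordinal (opt_slot_lt (ltn_num_items i)).

Lemma opt_slot_ord_inj b :
  {in [set i | opt_packing i == b] &, injective opt_slot_ord}.
Proof.
move=> i j /[!inE] /eqP i_b /eqP j_b [slot_eq]; apply/val_inj.
apply: opt_bin_slot_inj (ltn_num_items i) (ltn_num_items j) _ slot_eq.
by rewrite -!opt_packing_val i_b j_b.
Qed.

Lemma opt_packing_feasible : feasible_packing k opt_packing.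
Proof.
move=> b; set S := [set i | opt_packing i == b].
have slot_inj := @opt_slot_ord_inj b.
split.
  rewrite -(card_in_imset slot_inj).
  by apply: leq_trans (max_card _) _; rewrite card_ord.
apply: sum_items_le1; apply: leq_trans (slot_weight_sum b).
have -> : (\sum_(i | opt_packing i == b) weight i =
            \sum_(i in S) slot_weight b (opt_slot_ord i))%N.
  apply: eq_big => [i|i /eqP i_b]; first by rewrite inE.
  by rewrite weight_slot ?ltn_num_items // -opt_packing_val i_b.
rewrite -(big_imset (fun s : 'I_k => slot_weight b s) slot_inj) /=.
by rewrite [X in (_ <= X)%N](bigID (mem (opt_slot_ord @: S))) leq_addr.
Qed.

Lemma opt_packing_nbins : nbins opt_packing = N.+1.
Proof.
apply/eqP; rewrite eqn_leq nbins_instance_ge ?andbT; last exact: opt_packing_feasible.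
by apply: nbins_le_bound => i; rewrite ltnS opt_packing_val opt_bin_le ?ltn_num_items.
Qed.

Lemma OPT_instance : OPT_eq k instance N.+1.
Proof.
split; last exact: nbins_instance_ge.
exists opt_packing; split; last exact: opt_packing_nbins.
exact: opt_packing_feasible.
Qed.

Lemma ALG_instance_ge alg : k_card_alg k alg ->
  (k * (2 * N - 1) + (num_items - (2 * N - 1)) <= k * ALG alg instance)%N.
Proof.
move=> alg_ok; rewrite -size_instance.
apply: ALG_chain_lower_bound alg_ok valid_instance _ _.
  by rewrite size_instance /num_items; nia.
move=> i i_lt; rewrite !nth_mkseq ?item_pair_gt1 ?weight_chain //.
all: by rewrite /num_items; nia.
Qed.

End Items.

End Instance.

Theorem theorem14 (R : realType) (k : nat) (hk : (2 <= k)%N)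
    (alg : online_alg R) (halg : k_card_alg k alg) (m : nat) (hm : (3 <= m)%N) :
  exists I : seq R,
    valid_items I /\ OPT_eq k I m /\
    (k = 2%N -> (ALG alg I)%:R >= 2 * m%:R - 2 :> R) /\
    ((3 <= k)%N ->
       (ALG alg I)%:R >= (3 - 2 / k%:R) * m%:R - 5 + 5 / k%:R :> R).
Proof.
have N_gt0 : (0 < m.-1)%N by lia.
have -> : m = m.-1.+1 by lia.
move: (m.-1) N_gt0 => N N_gt0.
exists (instance k N R); split; first exact: valid_instance.
split; first exact: OPT_instance.
have := ALG_instance_ge hk N_gt0 halg; rewrite /num_items.
move: (ALG alg _) => A ALG_ge; split => [k2 | k_ge3].
  have : (2 * N.+1 <= A + 2)%N by subst k; lia.
  by rewrite -(ler_nat R) !natrD natrM => ?; lra.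
have : (3 * k * N.+1 + 5 <= k * A + 2 * N.+1 + 5 * k)%N by nia.
rewrite -(ler_nat R) !natrD !natrM => nat_bound.
have k_gt0 : 0 < k%:R :> R by rewrite ltr0n; lia.
rewrite -(ler_pM2l k_gt0).
have -> : k%:R * ((3 - 2 / k%:R) * N.+1%:R - 5 + 5 / k%:R) =
          3 * k%:R * N.+1%:R - 2 * N.+1%:R - 5 * k%:R + 5 :> R.
  by field; rewrite lt0r_neq0.
lra.
Qed.
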